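(* Let $k \ge 1$ and $k \le m < 2k$. The number of Grassmannian involutions of $[m]$ that avoid $\operatorname{id}_k=12\cdots k$ is $\left\lfloor \frac{(2k-m)^2}{4}\right\rfloor$.
   Context: A permutation is Grassmannian if it has at most one descent; a Grassmannian involution is a Grassmannian permutation $\pi$ with $\pi^{-1}=\pi$. A permutation avoids $12\cdots k$ if it has no increasing subsequence of length $k$. *)

From mathcomp Require Import all_boot all_order all_fingroup.
Set Implicit Arguments. Unset Strict Implicit. Unset Printing Implicit Defensive.

Local Open Scope nat_scope.

(* Permutations of [m] are represented as {perm 'I_m} (positions 0..m-1). *)

Definition descents (m : nat) (pi : {perm 'I_m}) : {set 'I_m} :=
  [set i : 'I_m | [exists j : 'I_m, (val j == (val i).+1) && (pi j < pi i)]].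

Definition grassmannian (m : nat) (pi : {perm 'I_m}) : bool :=
  #|descents pi| <= 1.

Definition involution (m : nat) (pi : {perm 'I_m}) : bool :=
  (pi^-1)%g == pi.

Definition contains_id (k m : nat) (pi : {perm 'I_m}) : bool :=
  [exists t : k.-tuple 'I_m,
     sorted (fun i j : 'I_m => (i < j) && (pi i < pi j)) t].

Definition avoids_id (k m : nat) (pi : {perm 'I_m}) : bool :=
  ~~ contains_id k pi.

From mathcomp Require Import all_boot all_order all_fingroup zify.

Set Implicit Arguments.
Unset Strict Implicit.
Unset Printing Implicit Defensive.

(* A Grassmannian involution with its descent at [d] is increasing on [0, d] and
   on [d+1, m); being an involution, it must then exchange the block of [b]
   positions ending at [d] with the block of [b] positions starting at [d+1] and
   fix everything else.  So the Grassmannian involutions of [m] are exactly the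
   block swaps [swap_blocks a b] with [a + 2b <= m].  An increasing subsequence of
   such a swap cannot meet both blocks, and skipping one block leaves one of
   length [m - b]; hence it avoids [12...k] iff [m < k + b].  For each admissible
   width [b > m - k] there are [m + 1 - 2b] offsets [a], and these counts run
   over every other integer below [2k - m], which sum to [(2k - m)^2 / 4]. *)

Definition swap_blocks (a b i : nat) : nat :=
  if i < a then i
  else if i < a + b then i + b
  else if i < a + 2 * b then i - b
  else i.

Lemma swap_blocksK a b : involutive (swap_blocks a b).
Proof.
move=> i; rewrite {2}/swap_blocks.
by repeat case: ifP => ?; rewrite /swap_blocks; repeat case: ifP => ?; lia.
Qed.

Lemma swap_blocks_ge a b i : a + 2 * b <= i -> swap_blocks a b i = i.
Proof. by rewrite /swap_blocks; repeat case: ifP => ?; lia. Qed.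

Lemma swap_blocks_lt a b m i : a + 2 * b <= m -> i < m -> swap_blocks a b i < m.
Proof. by rewrite /swap_blocks; repeat case: ifP => ?; lia. Qed.

Lemma swap_blocks_descent a b i :
  swap_blocks a b i.+1 < swap_blocks a b i -> i.+1 = a + b.
Proof. by rewrite /swap_blocks; repeat case: ifP => ?; lia. Qed.

Lemma swap_blocks_param_inj a b a' b' m :
  0 < b -> 0 < b' -> a + 2 * b <= m -> a' + 2 * b' <= m ->
  {in gtn m, swap_blocks a b =1 swap_blocks a' b'} -> a = a' /\ b = b'.
Proof.
move=> b_gt0 b'_gt0 abm abm' eq_swap.
have := eq_swap a; have := eq_swap a'; rewrite !inE /swap_blocks.
by move=> /(_ ltac:(lia)) + /(_ ltac:(lia)); repeat case: ifP => ?; lia.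
Qed.

Lemma increasing_gap (g : nat -> nat) l r :
  (forall i, l <= i -> i.+1 < r -> g i < g i.+1) ->
  forall i j, l <= i -> i <= j -> j < r -> g i + (j - i) <= g j.
Proof.
move=> g_incr i j li; elim: j => [|j IHj] ij jr.
  by rewrite leqn0 in ij; rewrite (eqP ij) subnn addn0.
case: (ltnP j i) => [ji | ij'].
  by rewrite (_ : i = j.+1) ?subnn ?addn0 //; lia.
by have := IHj ij' (ltnW jr); have := g_incr j (leq_trans li ij') jr; lia.
Qed.

Lemma increasing_selfmap_id m (p : nat -> nat) :
  (forall i, i < m -> p i < m) -> (forall i, i.+1 < m -> p i < p i.+1) ->
  forall i, i < m -> p i = i.
Proof.
move=> p_lt p_incr i im; have gap := @increasing_gap p 0 m (fun j _ => p_incr j).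
have := gap 0 i (leq0n _) (leq0n _) im; have := gap i m.-1 (leq0n _) ltac:(lia) ltac:(lia).
by have := @p_lt m.-1 ltac:(lia); lia.
Qed.

Section OneDescent.

Variables (m d : nat) (p : nat -> nat).
Hypothesis p_lt : forall i, i < m -> p i < m.
Hypothesis pK : forall i, i < m -> p (p i) = i.
Hypothesis d_lt : d.+1 < m.
Hypothesis descent_d : p d.+1 < p d.
Hypothesis ascent : forall i, i.+1 < m -> i != d -> p i < p i.+1.

Lemma gap_below_descent i j : i <= j <= d -> p i + (j - i) <= p j.
Proof.
move=> /andP[ij jd]; apply: (@increasing_gap p 0 d.+1) => // n _ nd.
by apply: ascent; lia.
Qed.

Lemma gap_above_descent i j : d < i -> i <= j < m -> p i + (j - i) <= p j.
Proof.
move=> di /andP[ij jm]; apply: (@increasing_gap p d.+1 m) => // n dn nm.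
by apply: ascent; lia.
Qed.

Lemma leq_self_below_descent i : i <= d -> i <= p i.
Proof. by move=> id; have := @gap_below_descent 0 i ltac:(lia); lia. Qed.

Lemma geq_self_above_descent i : d < i < m -> p i <= i.
Proof.
move=> /andP[di im]; have := @gap_above_descent i m.-1 di ltac:(lia).
by have := @p_lt m.-1 ltac:(lia); lia.
Qed.

(* Otherwise [p] fixes [0, d], leaving no preimage for [p d.+1 < d]. *)
Lemma descent_lt_image : d < p d.
Proof.
have := leq_self_below_descent (leqnn d); rewrite leq_eqVlt => /orP[/eqP pd_eq | //].
have fixed i : i <= d -> p i = i.
  by move=> id; have := @gap_below_descent i d ltac:(lia); have := leq_self_below_descent id; lia.
have := @pK d.+1 d_lt; rewrite fixed; lia.
Qed.

(* The swapped blocks are [[d.+1 - b, d]] and [[d.+1, p d]]. *)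
Let b := p d - d.

Lemma image_succ_descent : p d.+1 = d.+1 - b.
Proof.
have dq := descent_lt_image; have pq : p (p d) = d by apply: pK; lia.
have := @gap_above_descent d.+1 (p d) (ltnSn d) ltac:(have := @p_lt d; lia).
rewrite pq => gap_top.
by have := @gap_below_descent (p d.+1) d ltac:(lia); rewrite pK // /b; lia.
Qed.

Lemma shift_down_after_descent j : d < j <= p d -> p j = j - b.
Proof.
move=> /andP[dj jq]; have dq := descent_lt_image; have qm : p d < m by apply: p_lt; lia.
have := @gap_above_descent j (p d) dj ltac:(lia); rewrite pK; last by lia.
have := @gap_above_descent d.+1 j (ltnSn d) ltac:(lia).
by rewrite image_succ_descent /b; lia.
Qed.

Lemma shift_up_before_descent i : d.+1 - b <= i <= d -> p i = i + b.
Proof.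
move=> /andP[ai id]; have dq := descent_lt_image.
have pj := shift_down_after_descent (j := i + b) ltac:(rewrite /b; lia).
by have := @pK (i + b) ltac:(have := @p_lt d; rewrite /b; lia); rewrite pj addnK.
Qed.

Lemma fixed_before_swap i : i < d.+1 - b -> p i = i.
Proof.
rewrite /b => ia; have := leq_self_below_descent (i := i) ltac:(lia).
have := @gap_below_descent i d ltac:(lia); have := descent_lt_image => dq i_le le_i.
have := leq_self_below_descent (i := p i) ltac:(lia).
by rewrite pK; lia.
Qed.

Lemma fixed_after_swap i : p d < i < m -> p i = i.
Proof.
move=> /andP[qi im]; have dq := descent_lt_image.
have le_i := geq_self_above_descent (i := i) ltac:(lia); have pi_m := p_lt im.
have ppi := pK im.
case: (ltnP d (p i)) => [d_pi | pi_d].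
  case: (leqP (p i) (p d)) => [pi_q | q_pi].
    by have := shift_down_after_descent (j := p i) ltac:(lia); rewrite ppi; lia.
  by have := geq_self_above_descent (i := p i) ltac:(lia); rewrite ppi; lia.
case: (ltnP (p i) (d.+1 - b)) => [pi_a | a_pi].
  by have := fixed_before_swap pi_a; rewrite ppi; lia.
by have := shift_up_before_descent (i := p i) ltac:(lia); rewrite ppi /b; lia.
Qed.

Lemma swap_width_le : b <= d.+1.
Proof.
have dq := descent_lt_image; have := @p_lt d (ltnW d_lt).
have := @gap_above_descent d.+1 (p d) (ltnSn d); rewrite pK /b; lia.
Qed.

Lemma descent_swap_blocks :
  (d.+1 - b) + 2 * b <= m /\ {in gtn m, p =1 swap_blocks (d.+1 - b) b}.
Proof.
have := @p_lt d (ltnW d_lt); have := swap_width_le; have := descent_lt_image.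
rewrite /b => dq b_le qm; split; first by lia.
move=> i; rewrite inE => im; rewrite /swap_blocks.
case: ifP => [ia | ai]; first exact: fixed_before_swap.
case: ifP => [ib | bi]; first by apply: shift_up_before_descent; lia.
case: ifP => [ic | ci]; first by apply: shift_down_after_descent; lia.
by apply: fixed_after_swap; lia.
Qed.

End OneDescent.

Lemma involution_one_descent_swap_blocks m (p : nat -> nat) :
  (forall i, i < m -> p i < m) -> (forall i, i < m -> p (p i) = i) ->
  (forall i j, i.+1 < m -> j.+1 < m -> p i.+1 < p i -> p j.+1 < p j -> i = j) ->
  exists a b, a + 2 * b <= m /\ {in gtn m, p =1 swap_blocks a b}.
Proof.
move=> p_lt pK one_descent.
have p_neq_succ i : i.+1 < m -> p i != p i.+1.
  by move=> im; apply/eqP => /(congr1 p); rewrite !pK //; [lia | exact: ltnW].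
case: (boolP [exists d : 'I_m, (d.+1 < m) && (p d.+1 < p d)]).
  case/existsP => -[d _] /= /andP[d_lt descent_d].
  exists (d.+1 - (p d - d)), (p d - d).
  apply: descent_swap_blocks => // i im i_neq_d.
  case: (ltngtP (p i) (p i.+1)) => [// | desc | eq_succ].
    by move: i_neq_d; rewrite (one_descent i d im d_lt desc descent_d) eqxx.
  by move: (p_neq_succ i im); rewrite eq_succ eqxx.
move=> /existsPn no_descent; exists 0, 0; split=> // i; rewrite inE => im.
rewrite swap_blocks_ge //; apply: (increasing_selfmap_id p_lt _ im) => j jm.
case: (ltngtP (p j) (p j.+1)) => [// | desc | eq_succ].
  by have := no_descent (Ordinal (ltnW jm)); rewrite /= jm desc.
by move: (p_neq_succ j jm); rewrite eq_succ eqxx.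
Qed.

Lemma sorted_related_in (T : eqType) (r : rel T) (s : seq T) :
  transitive r -> sorted r s -> {in s &, forall x y, x != y -> r x y || r y x}.
Proof.
move=> r_tr s_sorted x y xs ys x_neq_y.
case: (ltngtP (index x s) (index y s)) => [lt_xy | lt_yx | eq_xy].
- by rewrite (sorted_ltn_index r_tr s_sorted x y xs ys lt_xy).
- by rewrite (sorted_ltn_index r_tr s_sorted y x ys xs lt_yx) orbT.
- by have := congr1 (nth x s) eq_xy; rewrite !nth_index // => xy; rewrite xy eqxx in x_neq_y.
Qed.

Lemma size_avoiding_block (s : seq nat) m c b :
  uniq s -> all (gtn m) s -> {in s, forall x, ~~ (c <= x < c + b)} -> c + b <= m ->
  size s + b <= m.
Proof.
move=> s_uniq s_lt s_out cbm.
have := @uniq_leq_size _ (s ++ iota c b) (iota 0 m); rewrite size_cat !size_iota; apply.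
  rewrite cat_uniq s_uniq iota_uniq andbT; apply/hasPn => x.
  by rewrite mem_iota => x_in; apply/negP => /s_out; rewrite x_in.
move=> x; rewrite mem_cat !mem_iota add0n => /orP[/(allP s_lt) | ] /=; lia.
Qed.

Section PermNat.

Variables (m : nat) (pi : {perm 'I_m}).

(* Positions as naturals, so that [lia] handles the index arithmetic. *)
Definition perm_nat (i : nat) : nat :=
  if insub i is Some j then val (pi j) else i.

Lemma perm_natE (j : 'I_m) : perm_nat j = pi j.
Proof. by rewrite /perm_nat valK. Qed.

Lemma perm_nat_ge i : m <= i -> perm_nat i = i.
Proof. by move=> mi; rewrite /perm_nat insubN // -leqNgt. Qed.

Lemma perm_nat_lt i : i < m -> perm_nat i < m.
Proof. by move=> im; rewrite -[i]/(val (Ordinal im)) perm_natE. Qed.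

Lemma perm_natK : involution pi -> involutive perm_nat.
Proof.
move=> /eqP piV i; case: (ltnP i m) => [im | mi]; last by rewrite !perm_nat_ge.
by rewrite -[i]/(val (Ordinal im)) !perm_natE -{1}piV permK.
Qed.

Lemma mem_descents (i : 'I_m) :
  (i \in descents pi) = (i.+1 < m) && (perm_nat i.+1 < perm_nat i).
Proof.
rewrite inE perm_natE; apply/existsP/andP => [[j /andP[/eqP ji desc]] | [im desc]].
  by rewrite -ji ltn_ord -[val j]/(nat_of_ord j) perm_natE.
by exists (Ordinal im); rewrite eqxx -[i.+1]/(val (Ordinal im)) perm_natE in desc *.
Qed.

Lemma contains_id_nat k :
  contains_id k pi <->
  exists s : seq nat, [/\ size s = k, all (gtn m) s &
    sorted (fun i j => (i < j) && (perm_nat i < perm_nat j)) s].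
Proof.
split=> [/existsP[t t_sorted] | [s [size_s s_lt s_sorted]]].
  exists (map val t); rewrite size_map size_tuple; split=> //.
    by apply/allP => _ /mapP[i _ ->]; exact: ltn_ord.
  by rewrite sorted_map; apply: sub_sorted t_sorted => i j; rewrite /= !perm_natE.
pose t := pmap insub s : seq 'I_m.
have val_t : map val t = s.
  rewrite (pmap_filter (insubK _)); apply/all_filterP.
  by apply: sub_all s_lt => i; rewrite isSome_insub.
have size_t : size t == k by rewrite -(size_map val) val_t size_s.
apply/existsP; exists (Tuple size_t); move: s_sorted; rewrite -val_t sorted_map /=.
by apply: sub_sorted => i j; rewrite /= !perm_natE.
Qed.

Lemma grassmannian_involution_swap_blocks :
  grassmannian pi -> involution pi ->
  exists a b, a + 2 * b <= m /\ perm_nat =1 swap_blocks a b.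
Proof.
move=> /card_le1_eqP one_descent /perm_natK pK.
have [a [b [abm eq_swap]]] : exists a b, a + 2 * b <= m /\ {in gtn m, perm_nat =1 swap_blocks a b}.
  apply: involution_one_descent_swap_blocks => [i | i _ | i j im jm desc_i desc_j].
  - exact: perm_nat_lt.
  - exact: pK.
  have di : Ordinal (ltnW im) \in descents pi by rewrite mem_descents im.
  have dj : Ordinal (ltnW jm) \in descents pi by rewrite mem_descents jm.
  by have := one_descent _ _ di dj => /(congr1 val).
exists a, b; split=> // i; case: (ltnP i m) => [im | mi]; first exact: eq_swap.
by rewrite perm_nat_ge ?swap_blocks_ge //; lia.
Qed.

Section SwapBlocksPerm.

Variables a b : nat.
Hypothesis perm_nat_swap : perm_nat =1 swap_blocks a b.

Lemma grassmannian_swap_blocks : grassmannian pi.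
Proof.
apply/card_le1_eqP => i j; rewrite !mem_descents !perm_nat_swap.
move=> /andP[_ /swap_blocks_descent ?] /andP[_ /swap_blocks_descent ?].
by apply: val_inj => /=; lia.
Qed.

Lemma involution_swap_blocks : involution pi.
Proof.
apply/eqP/permP => i; apply: (@perm_inj _ pi); rewrite permKV; apply: ord_inj.
by rewrite -!perm_natE !perm_nat_swap swap_blocksK.
Qed.

Hypothesis abm : a + 2 * b <= m.

Lemma avoids_id_swap_blocks k : avoids_id k pi = (m < k + b).
Proof.
set rel_pi := fun i j => (i < j) && (perm_nat i < perm_nat j).
apply/idP/idP => [avoid | mkb].
  rewrite ltnNge; apply/negP => kbm; move/negP: avoid; apply; apply/contains_id_nat.
  exists [seq if t < a then t else t + b | t <- iota 0 k]; split.
  - by rewrite size_map size_iota.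
  - by apply/allP => x /mapP[t]; rewrite mem_iota => t_lt ->; case: ifP => /=; lia.
  rewrite sorted_map; apply: sub_sorted (iota_ltn_sorted 0 k) => u v /= uv.
  by rewrite !perm_nat_swap /swap_blocks; repeat case: ifP => ?; lia.
apply/negP => /contains_id_nat[s [size_s s_lt s_sorted]].
have rel_tr : transitive rel_pi by move=> y x z /andP[? ?] /andP[? ?]; apply/andP; lia.
have s_uniq : uniq s.
  by apply: (sorted_uniq ltn_trans ltnn); apply: sub_sorted s_sorted => x y /andP[].
have [first_out | second_out] :
    {in s, forall x, ~~ (a <= x < a + b)} \/ {in s, forall x, ~~ (a + b <= x < a + b + b)}.
- case: (boolP (has (fun x => a <= x < a + b) s)) => [/hasP[x xs x_in] | /hasPn]; last by left.
  right=> y ys; apply/negP => y_in.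
  have := sorted_related_in rel_tr s_sorted xs ys ltac:(apply/eqP; lia).
  by rewrite /rel_pi !perm_nat_swap /swap_blocks; repeat case: ifP => ?; lia.
- by have := size_avoiding_block s_uniq s_lt first_out ltac:(lia); lia.
- by have := size_avoiding_block s_uniq s_lt second_out ltac:(lia); lia.
Qed.

End SwapBlocksPerm.

End PermNat.

Lemma perm_nat_inj m (pi sigma : {perm 'I_m}) : perm_nat pi =1 perm_nat sigma -> pi = sigma.
Proof. by move=> eq_pi; apply/permP => i; apply: ord_inj; rewrite -!perm_natE. Qed.

(* The identity when the blocks do not fit into ['I_m]. *)
Definition swap_blocks_ord m a b (i : 'I_m) : 'I_m :=
  if a + 2 * b <= m then insubd i (swap_blocks a b i) else i.

Lemma swap_blocks_ordE m a b (i : 'I_m) :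
  a + 2 * b <= m -> swap_blocks_ord a b i = swap_blocks a b i :> nat.
Proof. by move=> abm; rewrite /swap_blocks_ord abm val_insubd (swap_blocks_lt abm (ltn_ord i)). Qed.

Lemma swap_blocks_ordK m a b : involutive (@swap_blocks_ord m a b).
Proof.
move=> i; case: (boolP (a + 2 * b <= m)) => [abm | /negbTE ab_gt].
  by apply: ord_inj; rewrite !swap_blocks_ordE // swap_blocksK.
by rewrite /swap_blocks_ord ab_gt.
Qed.

Definition swap_blocks_perm m a b : {perm 'I_m} := perm (can_inj (@swap_blocks_ordK m a b)).

Lemma perm_nat_swap_blocks_perm m a b :
  a + 2 * b <= m -> perm_nat (swap_blocks_perm m a b) =1 swap_blocks a b.
Proof.
move=> abm i; case: (ltnP i m) => [im | mi]; last by rewrite perm_nat_ge ?swap_blocks_ge //; lia.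
by rewrite -[i]/(val (Ordinal im)) perm_natE permE swap_blocks_ordE.
Qed.

Lemma sum_ord_lt n t : \sum_(i < n) (i < t) = minn t n.
Proof. by elim: n => [|n IHn]; rewrite ?big_ord0 ?big_ord_recr /= ?IHn; lia. Qed.

Lemma sum_odd_gaps n : \sum_(0 <= t < n) (n - t.*2.+1) = n ^ 2 %/ 4.
Proof.
elim/ltn_ind: n => -[|[|n]] IHn; [by rewrite big_geq | by rewrite big_nat1 |].
rewrite big_nat_recl // big_nat_recr //=.
rewrite (eq_big_nat _ _ (F2 := fun t => n - t.*2.+1)) => [|t _]; last by lia.
by rewrite IHn //; lia.
Qed.

Lemma sum_odd_gaps_widen n K : n <= K -> \sum_(0 <= t < K) (n - t.*2.+1) = n ^ 2 %/ 4.
Proof.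
move=> nK; rewrite (big_cat_nat _ (n := n)) //= sum_odd_gaps big_nat_cond big1 ?addn0 //.
by move=> t /andP[/andP[nt _] _]; lia.
Qed.

(* Pairs [(b, a)] of block width and offset. *)
Definition swap_params_avoiding k m : {set 'I_m.+1 * 'I_m.+1} :=
  [set p : 'I_m.+1 * 'I_m.+1 | (m < k + p.1) && (p.2 + 2 * p.1 <= m)].

Lemma card_swap_params_avoiding k m :
  k <= m -> m < 2 * k -> #|swap_params_avoiding k m| = (2 * k - m) ^ 2 %/ 4.
Proof.
move=> km mk; rewrite -sum1_card big_mkcond /=.
set P := swap_params_avoiding k m.
have -> : \sum_(p : 'I_m.+1 * 'I_m.+1) (if p \in P then 1 else 0)
    = \sum_(b < m.+1) \sum_(a < m.+1) (if (b, a) \in P then 1 else 0).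
  by rewrite pair_bigA; apply: eq_bigr => -[].
have inner (b : 'I_m.+1) :
    \sum_(a < m.+1) (if (b, a) \in P then 1 else 0)
    = (m < k + b) * (m.+1 - b.*2).
  rewrite (eq_bigr (fun a : 'I_m.+1 => (m < k + b) * (a < m.+1 - b.*2))) => [|a _].
    by rewrite -big_distrr sum_ord_lt /=; lia.
  rewrite inE /=; have -> : (a + 2 * b <= m) = (a < m.+1 - b.*2) by apply/idP/idP; lia.
  by case: (m < k + b); case: (a < _).
rewrite (eq_bigr _ (fun b _ => inner b)).
rewrite -(@big_mkord _ 0 addn m.+1 xpredT (fun b => (m < k + b) * (m.+1 - b.*2))).
(* Only widths [b = m - k + 1 + t] count, each with [2k - m - (2t + 1)] offsets. *)
rewrite (big_cat_nat _ (n := (m - k).+1)) //=; last by lia.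
rewrite big_nat_cond big1 ?add0n => [|b /andP[/andP[_ b_le] _]]; last by lia.
rewrite -{1}(add0n (m - k).+1) big_addn.
rewrite (eq_big_nat _ _ (F2 := fun t => (2 * k - m) - t.*2.+1)) => [|t _]; last by lia.
by apply: sum_odd_gaps_widen; lia.
Qed.

Lemma grassmannian_involutions_avoiding k m :
  [set pi : {perm 'I_m} | [&& grassmannian pi, involution pi & avoids_id k pi]]
  = [set swap_blocks_perm m p.2 p.1 | p : 'I_m.+1 * 'I_m.+1 in swap_params_avoiding k m].
Proof.
apply/setP => pi; rewrite inE; apply/idP/imsetP => [/and3P[gr inv avoid] | [[b a]]].
  have [a [b [abm eq_swap]]] := grassmannian_involution_swap_blocks gr inv.
  exists (inord b, inord a).
    by rewrite inE /= !inordK -?(avoids_id_swap_blocks eq_swap abm) ?avoid ?abm //; lia.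
  apply: perm_nat_inj => i; rewrite perm_nat_swap_blocks_perm /= !inordK ?eq_swap //; lia.
rewrite inE /= => /andP[mkb abm] ->; have eq_swap := perm_nat_swap_blocks_perm abm.
by rewrite (grassmannian_swap_blocks eq_swap) (involution_swap_blocks eq_swap)
  (avoids_id_swap_blocks eq_swap abm).
Qed.

Lemma swap_blocks_perm_inj k m : k <= m ->
  {in swap_params_avoiding k m &,
    injective (fun p : 'I_m.+1 * 'I_m.+1 => swap_blocks_perm m p.2 p.1)}.
Proof.
move=> km [b a] [b' a']; rewrite !inE /= => /andP[mkb abm] /andP[mkb' abm'] eq_perm.
have [eq_a eq_b] : a = a' :> nat /\ b = b' :> nat.
  apply: (swap_blocks_param_inj _ _ abm abm'); try lia.
  by move=> i _; rewrite -(perm_nat_swap_blocks_perm abm) -(perm_nat_swap_blocks_perm abm') eq_perm.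
by congr pair; apply: val_inj.
Qed.

Theorem mainTheorem18 (k m : nat) (hk : 1 <= k) (hkm : k <= m) (hm : m < 2 * k) :
  #|[set pi : {perm 'I_m} | [&& grassmannian pi, involution pi & avoids_id k pi]]|
  = (2 * k - m) ^ 2 %/ 4.
Proof.
rewrite grassmannian_involutions_avoiding card_in_imset; last exact: swap_blocks_perm_inj.
exact: card_swap_params_avoiding.
Qed.
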